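(* There exists a ring satisfying (NK) if and only if there exists a countably generated $F$-algebra satisfying (NK), where $F=\mathbb Q$ or $F=\mathbb Z_p$ for some prime number $p$. Equivalently, Köthe's Conjecture holds if and only if there is no countably generated $F$-algebra satisfying (NK) with $F=\mathbb Q$ or $F=\mathbb Z_p$, $p$ prime.
   Context: All rings are associative with unit. A right ideal is nil if all its elements are nilpotent. A ring satisfies the condition (NK) if it contains two nil right ideals whose sum is not nil. Köthe's Conjecture (every ring with no non-zero nil two-sided ideal has no non-zero nil one-sided ideal) is known to be equivalent to the statement that no ring satisfies (NK). *)

From HB Require Import structures.
From mathcomp Require Import all_boot all_order all_algebra.
Set Implicit Arguments. Unset Strict Implicit. Unset Printing Implicit Defensive.
Import GRing.Theory.
Local Open Scope ring_scope.

Definition right_ideal (R : pzRingType) (I : R -> Prop) : Prop :=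
  [/\ I 0,
      (forall x y, I x -> I y -> I (x - y)) &
      (forall x r, I x -> I (x * r))].

Definition nilpotent_elt (R : pzRingType) (x : R) : Prop :=
  exists n : nat, x ^+ n = 0.

Definition nil_set (R : pzRingType) (I : R -> Prop) : Prop :=
  forall x, I x -> nilpotent_elt x.

Definition NK (R : pzRingType) : Prop :=
  exists I J : R -> Prop,
    [/\ right_ideal I, right_ideal J, nil_set I, nil_set J &
        ~ nil_set (fun z => exists x y, [/\ I x, J y & z = x + y])].

Definition alg_generated_by (F : pzRingType) (A : algType F) (g : nat -> A) : Prop :=
  forall P : A -> Prop,
    P 1 ->
    (forall x y, P x -> P y -> P (x + y)) ->
    (forall (k : F) x, P x -> P (k *: x)) ->
    (forall x y, P x -> P y -> P (x * y)) ->
    (forall n, P (g n)) ->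
    forall x, P x.

Definition countably_generated (F : pzRingType) (A : algType F) : Prop :=
  exists g : nat -> A, alg_generated_by g.

From HB Require Import structures.
From mathcomp Require Import all_boot all_order all_algebra finfield.
From mathcomp Require Import generic_quotient boolp classical_sets ring.
Set Implicit Arguments. Unset Strict Implicit. Unset Printing Implicit Defensive.
Import GRing.Theory Num.Theory.
Local Open Scope ring_scope.
Local Open Scope quotient_scope.
Local Open Scope classical_set_scope.

(* Let x, y lie in nil right ideals I, J of R with w = x + y not nilpotent.
   If no power of w is additively torsion, tensor with Q: in the localization
   R[1/n : n > 0] the fractions i/n with i in I (resp. J) still form nil right
   ideals, and w stays non-nilpotent.  Otherwise M w^k = 0 for some M > 0, and a
   descent on M yields a prime p such that no power of w dies in the
   F_p-algebra R_(p) / p R_(p); the images of I and J are then nil right ideals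
   of that quotient with non-nilpotent sum.  In either case the subalgebra
   generated by the images of x and y is countably generated and satisfies (NK). *)

(** * Rings presented up to a congruence *)

Record congr_ring (T : choiceType) := CongrRing {
  cr_rel : T -> T -> Prop;
  cr_zero : T; cr_one : T;
  cr_opp : T -> T; cr_add : T -> T -> T; cr_mul : T -> T -> T;
  cr_refl : forall x, cr_rel x x;
  cr_sym : forall x y, cr_rel x y -> cr_rel y x;
  cr_trans : forall x y z, cr_rel x y -> cr_rel y z -> cr_rel x z;
  cr_opp_congr : forall x x', cr_rel x x' -> cr_rel (cr_opp x) (cr_opp x');
  cr_add_congr : forall x x' y y', cr_rel x x' -> cr_rel y y' ->
    cr_rel (cr_add x y) (cr_add x' y');
  cr_mul_congr : forall x x' y y', cr_rel x x' -> cr_rel y y' ->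
    cr_rel (cr_mul x y) (cr_mul x' y');
  cr_addA : forall x y z, cr_rel (cr_add x (cr_add y z)) (cr_add (cr_add x y) z);
  cr_addC : forall x y, cr_rel (cr_add x y) (cr_add y x);
  cr_add0 : forall x, cr_rel (cr_add cr_zero x) x;
  cr_addN : forall x, cr_rel (cr_add (cr_opp x) x) cr_zero;
  cr_mulA : forall x y z, cr_rel (cr_mul x (cr_mul y z)) (cr_mul (cr_mul x y) z);
  cr_mul1l : forall x, cr_rel (cr_mul cr_one x) x;
  cr_mul1r : forall x, cr_rel (cr_mul x cr_one) x;
  cr_mulDl : forall x y z,
    cr_rel (cr_mul (cr_add x y) z) (cr_add (cr_mul x z) (cr_mul y z));
  cr_mulDr : forall x y z,
    cr_rel (cr_mul x (cr_add y z)) (cr_add (cr_mul x y) (cr_mul x z));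
  cr_one_neq0 : ~ cr_rel cr_one cr_zero
}.

Section QuotientRing.
Variables (T : choiceType) (C : congr_ring T).
Local Notation rel := (cr_rel C).

Definition cr_equiv x y := `[< rel x y >].

Lemma cr_equiv_class : equiv_class_of cr_equiv.
Proof.
split=> [x | x y | y x z]; rewrite /cr_equiv.
- exact/asboolT/cr_refl.
- by apply/asboolP/asboolP => /cr_sym.
- by move=> /asboolP hxy /asboolP hyz; apply/asboolT/(cr_trans hxy).
Qed.

Canonical cr_equiv_rel := EquivRelPack cr_equiv_class.

Definition quot_ring := {eq_quot cr_equiv_rel}.
HB.instance Definition _ := Choice.on quot_ring.

Definition quot_pi (x : T) : quot_ring := \pi x.
Local Notation pi := quot_pi.

Lemma pi_eqP x y : pi x = pi y <-> rel x y.
Proof.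
rewrite /cr_equiv /quot_pi; split=> [h | /asboolT h].
  by apply/asboolP; have /eqmodP := h.
by apply/eqmodP.
Qed.

Lemma quot_ringW (P : quot_ring -> Prop) : (forall x, P (pi x)) -> forall a, P a.
Proof. by move=> h a; have := h (repr a); rewrite /quot_pi reprK. Qed.

Lemma pi_repr x : rel (repr (pi x)) x.
Proof. by apply/pi_eqP; rewrite /quot_pi reprK. Qed.

Definition qzero := pi (cr_zero C).
Definition qone := pi (cr_one C).
Definition qopp (a : quot_ring) := pi (cr_opp C (repr a)).
Definition qadd (a b : quot_ring) := pi (cr_add C (repr a) (repr b)).
Definition qmul (a b : quot_ring) := pi (cr_mul C (repr a) (repr b)).

Lemma pi_opp x : pi (cr_opp C x) = qopp (pi x).
Proof. by apply/pi_eqP/cr_opp_congr/cr_sym/pi_repr. Qed.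

Lemma pi_add x y : pi (cr_add C x y) = qadd (pi x) (pi y).
Proof. by apply/pi_eqP/cr_add_congr; apply/cr_sym/pi_repr. Qed.

Lemma pi_mul x y : pi (cr_mul C x y) = qmul (pi x) (pi y).
Proof. by apply/pi_eqP/cr_mul_congr; apply/cr_sym/pi_repr. Qed.

Lemma qaddA : associative qadd.
Proof. by do 3!elim/quot_ringW=> ?; rewrite -!pi_add; apply/pi_eqP; apply: cr_addA. Qed.

Lemma qaddC : commutative qadd.
Proof. by do 2!elim/quot_ringW=> ?; rewrite -!pi_add; apply/pi_eqP; apply: cr_addC. Qed.

Lemma qadd0 : left_id qzero qadd.
Proof. by elim/quot_ringW=> ?; rewrite -pi_add; apply/pi_eqP; apply: cr_add0. Qed.

Lemma qaddN : left_inverse qzero qopp qadd.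
Proof. by elim/quot_ringW=> ?; rewrite -pi_opp -pi_add; apply/pi_eqP; apply: cr_addN. Qed.

HB.instance Definition _ := GRing.isZmodule.Build quot_ring qaddA qaddC qadd0 qaddN.

Lemma piD x y : pi (cr_add C x y) = pi x + pi y. Proof. exact: pi_add. Qed.
Lemma piN x : pi (cr_opp C x) = - pi x. Proof. exact: pi_opp. Qed.

Lemma qmulA : associative qmul.
Proof. by do 3!elim/quot_ringW=> ?; rewrite -!pi_mul; apply/pi_eqP; apply: cr_mulA. Qed.

Lemma qmul1l : left_id qone qmul.
Proof. by elim/quot_ringW=> ?; rewrite -pi_mul; apply/pi_eqP; apply: cr_mul1l. Qed.

Lemma qmul1r : right_id qone qmul.
Proof. by elim/quot_ringW=> ?; rewrite -pi_mul; apply/pi_eqP; apply: cr_mul1r. Qed.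

Lemma qmulDl : left_distributive qmul +%R.
Proof.
by do 3!elim/quot_ringW=> ?; rewrite -piD -!pi_mul -piD; apply/pi_eqP; apply: cr_mulDl.
Qed.

Lemma qmulDr : right_distributive qmul +%R.
Proof.
by do 3!elim/quot_ringW=> ?; rewrite -piD -!pi_mul -piD; apply/pi_eqP; apply: cr_mulDr.
Qed.

Lemma qone_neq0 : qone != 0.
Proof. by apply/eqP => /pi_eqP; apply: cr_one_neq0. Qed.

HB.instance Definition _ :=
  GRing.Zmodule_isNzRing.Build quot_ring qmulA qmul1l qmul1r qmulDl qmulDr qone_neq0.

Lemma piM x y : pi (cr_mul C x y) = pi x * pi y. Proof. exact: pi_mul. Qed.
End QuotientRing.

(** * Transporting condition (NK) *)

Variant NK_witness (R : pzRingType) : Prop :=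
  NKWitness (I J : set R) (x y : R) of right_ideal I & right_ideal J
    & nil_set I & nil_set J & I x & J y & ~ nilpotent_elt (x + y).

Lemma NK_witnessP (R : pzRingType) : NK R <-> NK_witness R.
Proof.
split=> [[I [J [hI hJ nI nJ]]] | [I J x y hI hJ nI nJ Ix Jy nxy]].
  move/existsNP=> [_ /not_implyP [[x [y [Ix Jy ->]]] nxy]].
  exact: (NKWitness hI hJ nI nJ Ix Jy).
exists I, J; split=> // /(_ (x + y)) nil_xy; apply/nxy/nil_xy.
by exists x, y.
Qed.

Section RMorphismTransfer.
Variables (A B : pzRingType) (f : {rmorphism A -> B}).

Lemma nilpotent_rmorph x : nilpotent_elt x -> nilpotent_elt (f x).
Proof. by move=> [n xn0]; exists n; rewrite -rmorphXn xn0 rmorph0. Qed.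

Lemma right_ideal_preimage (I : set B) : right_ideal I -> right_ideal (f @^-1` I).
Proof.
move=> [I0 IB IM]; split=> [|x y|x r] /=; first by rewrite rmorph0.
  by rewrite rmorphB; apply: IB.
by rewrite rmorphM; apply: IM.
Qed.

Lemma nil_set_preimage (I : set B) : injective f -> nil_set I -> nil_set (f @^-1` I).
Proof.
move=> f_inj nI x /nI [n fxn0]; exists n; apply: f_inj.
by rewrite rmorphXn fxn0 rmorph0.
Qed.

Lemma right_ideal_image (I : set A) :
  (forall b, exists a, f a = b) -> right_ideal I -> right_ideal (f @` I).
Proof.
move=> f_surj [I0 IB IM]; split=> [|_ _ [x Ix <-] [y Iy <-]|_ r [x Ix <-]].
- by exists 0; rewrite ?rmorph0.
- by exists (x - y); [apply: IB | rewrite rmorphB].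
- have [a <-] := f_surj r.
  by exists (x * a); [apply: IM | rewrite rmorphM].
Qed.

Lemma nil_set_image (I : set A) : nil_set I -> nil_set (f @` I).
Proof. by move=> nI _ [x /nI xnil <-]; apply: nilpotent_rmorph. Qed.

End RMorphismTransfer.

Section GeneratedSubalgebra.
Variables (F : pzRingType) (B : algType F) (g : nat -> B).

Definition generated_by_family (v : B) : Prop :=
  forall P : B -> Prop,
    P 1 ->
    (forall x y, P x -> P y -> P (x + y)) ->
    (forall (k : F) x, P x -> P (k *: x)) ->
    (forall x y, P x -> P y -> P (x * y)) ->
    (forall n, P (g n)) -> P v.

Definition gen_subalg_pred : {pred B} := fun v => `[< generated_by_family v >].

Lemma gen_subalg_closed : GRing.subsemialg_closed gen_subalg_pred.
Proof.
split=> [|| k u /asboolP hu | u v /asboolP hu /asboolP hv].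
- by apply/asboolP.
- split=> [|u v /asboolP hu /asboolP hv]; apply/asboolP=> P P1 PD PZ PM Pg.
    by rewrite -(scale0r 1); apply: PZ.
  exact: PD (hu P P1 PD PZ PM Pg) (hv P P1 PD PZ PM Pg).
- apply/asboolP=> P P1 PD PZ PM Pg; exact: PZ (hu P P1 PD PZ PM Pg).
- apply/asboolP=> P P1 PD PZ PM Pg; exact: PM (hu P P1 PD PZ PM Pg) (hv P P1 PD PZ PM Pg).
Qed.

HB.instance Definition _ :=
  GRing.isSubalgClosed.Build F B gen_subalg_pred gen_subalg_closed.

Record gen_subalg := GenSubalg { gen_val : B; _ : gen_val \in gen_subalg_pred }.
HB.instance Definition _ := [isSub for gen_val].
HB.instance Definition _ := [Choice of gen_subalg by <:].
HB.instance Definition _ := [SubChoice_isSubAlgebra of gen_subalg by <:].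

Lemma gen_mem n : g n \in gen_subalg_pred.
Proof. by apply/asboolP=> P _ _ _ _; apply. Qed.

Lemma gen_subalg_generated : alg_generated_by (fun n => GenSubalg (gen_mem n)).
Proof.
move=> P P1 PD PZ PM Pg [v v_in].
pose Q w := exists w_in : w \in gen_subalg_pred, P (GenSubalg w_in).
suff [v_in' Pv] : Q v by rewrite (bool_irrelevance v_in v_in').
have /asboolP := v_in; apply=> [|u w [u_in Pu] [w_in Pw]|k u [u_in Pu]
  |u w [u_in Pu] [w_in Pw]|n].
- exists (rpred1 _).
  by have -> : GenSubalg (rpred1 gen_subalg_pred) = 1 by apply: val_inj.
- exists (rpredD u_in w_in).
  have -> : GenSubalg (rpredD u_in w_in) = GenSubalg u_in + GenSubalg w_in
    by apply: val_inj.
  exact: PD.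
- exists (rpredZ k u_in).
  have -> : GenSubalg (rpredZ k u_in) = k *: GenSubalg u_in
    by apply: val_inj.
  exact: PZ.
- exists (rpredM u_in w_in).
  have -> : GenSubalg (rpredM u_in w_in) = GenSubalg u_in * GenSubalg w_in
    by apply: val_inj.
  exact: PM.
- by exists (gen_mem n).
Qed.

Lemma countably_generated_gen_subalg : countably_generated gen_subalg.
Proof. by eexists; apply: gen_subalg_generated. Qed.

End GeneratedSubalgebra.

Lemma NK_countably_generated_subalg (F : pzRingType) (B : algType F) :
  NK_witness B -> exists A : algType F, countably_generated A /\ NK A.
Proof.
case=> I J x y hI hJ nI nJ Ix Jy nxy.
pose g n := if n is 0 then x else y.
exists (gen_subalg g); split; first exact: countably_generated_gen_subalg.
apply/NK_witnessP.
have val_inj' : injective (val : gen_subalg g -> B) by apply: val_inj.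
apply: (NKWitness (right_ideal_preimage _ hI) (right_ideal_preimage _ hJ)
  (nil_set_preimage val_inj' nI) (nil_set_preimage val_inj' nJ)
  (_ : I (val (GenSubalg (gen_mem g 0)))) (_ : J (val (GenSubalg (gen_mem g 1))))) => //.
by move/(nilpotent_rmorph val); rewrite rmorphD.
Qed.

(** * Reduction modulo a prime *)

Lemma mulrn_gcdn_eq0 (V : zmodType) (v : V) m n :
  v *+ m = 0 -> v *+ n = 0 -> v *+ gcdn m n = 0.
Proof.
move=> vm vn; have [-> | m_gt0] := posnP m; first by rewrite gcd0n.
have [a _ /dvdnP [q Bezout_mn]] := Bezoutl n m_gt0.
have : v *+ (gcdn m n + a * n) = 0 by rewrite Bezout_mn mulnC mulrnA vm mul0rn.
by rewrite mulrnDr mulnC mulrnA vn mul0rn addr0.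
Qed.

Section PDivisible.
Variables (R : pzRingType) (p : nat).
Hypothesis p_pr : prime p.

(* [a] lies in the kernel of R -> R_(p) / p R_(p). *)
Definition p_divisible (a : R) := exists n b, ~~ (p %| n)%N /\ a *+ n = b *+ p.

Lemma p_divisible_mulrn (b : R) : p_divisible (b *+ p).
Proof.
exists 1%N, b; split; last by rewrite mulr1n.
by rewrite dvdn1; apply: contraTneq p_pr => ->.
Qed.

Lemma p_divisible0 : p_divisible 0.
Proof. by rewrite -(mul0rn _ p); apply: p_divisible_mulrn. Qed.

Lemma p_divisibleN a : p_divisible a -> p_divisible (- a).
Proof. by move=> [n [b [p'n e]]]; exists n, (- b); rewrite !mulNrn e. Qed.

Lemma p_divisibleD a c : p_divisible a -> p_divisible c -> p_divisible (a + c).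
Proof.
move=> [n [b [p'n ae]]] [m [d [p'm ce]]]; exists (n * m)%N, (b *+ m + d *+ n).
split; first by rewrite Euclid_dvdM // negb_or p'n.
by rewrite mulrnDl mulrnA ae mulnC mulrnA ce -!mulrnA mulrnDl -!mulrnA
  [(p * m)%N]mulnC [(p * n)%N]mulnC.
Qed.

Lemma p_divisibleMl a c : p_divisible a -> p_divisible (c * a).
Proof. by move=> [n [b [p'n e]]]; exists n, (c * b); rewrite -!mulrnAr e. Qed.

Lemma p_divisibleMr a c : p_divisible a -> p_divisible (a * c).
Proof. by move=> [n [b [p'n e]]]; exists n, (b * c); rewrite -!mulrnAl e. Qed.

End PDivisible.

Section PrimeAvoidingPowers.
Variable R : pzRingType.

Lemma mulrn_expr_eq0 (z : R) k i M : (k <= i)%N -> z ^+ k *+ M = 0 -> z ^+ i *+ M = 0.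
Proof. by move=> /subnKC <- zkM; rewrite exprD -mulrnAl zkM mul0r. Qed.

(* With [n z^j = p b], the element [w = n z^(j+k)] lies in [p R] and satisfies
   [M w = 0]; hence [(M/p) w^2 = 0], and since [n^2] is prime to [p] this
   yields [(M/p) z^(2(j+k)) = 0]. *)
Lemma p_divisible_descent (z : R) p j k M : prime p -> (p %| M)%N ->
  z ^+ k *+ M = 0 -> p_divisible p (z ^+ j) -> z ^+ (j + k).*2 *+ (M %/ p) = 0.
Proof.
move=> p_pr pM zkM [n [b [p'n zjn]]].
set u := z ^+ (j + k); set w := u *+ n.
have uM : u *+ M = 0 by rewrite (mulrn_expr_eq0 _ zkM) ?leq_addl.
have wp : w = (b * z ^+ k) *+ p by rewrite /w /u exprD -mulrnAl zjn mulrnAl.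
have ww : (w * w) *+ (M %/ p) = 0.
  rewrite -mulrnAr {2}wp -mulrnA mulnC divnK // mulrnAr.
  by rewrite -mulrnAl /w -mulrnA mulnC mulrnA uM mul0rn mul0r.
have zK_n2 : z ^+ (j + k).*2 *+ (n * n * (M %/ p)) = 0.
  have uu : (u * u) *+ (n * n) = w * w by rewrite mulrnA -mulrnAr -mulrnAl.
  by rewrite -addnn exprD -/u mulrnA uu.
have zK_p : z ^+ (j + k).*2 *+ (p * (M %/ p)) = 0.
  rewrite mulnC divnK // (mulrn_expr_eq0 _ zkM) //.
  by rewrite -addnn (leq_trans (leq_addl j k)) ?leq_addr.
have := mulrn_gcdn_eq0 zK_n2 zK_p.
rewrite -muln_gcdl (eqP (_ : coprime (n * n) p)) ?mul1n //.
by rewrite coprime_sym prime_coprime // Euclid_dvdM // negb_or p'n.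
Qed.

Lemma prime_avoiding_powers (z : R) k M : ~ nilpotent_elt z -> (0 < M)%N ->
  z ^+ k *+ M = 0 -> exists2 p, prime p & forall j, ~ p_divisible p (z ^+ j).
Proof.
move=> z_nnil; elim/ltn_ind: M k => M IH k M_gt0 zkM.
have [M_le1 | M_gt1] := leqP M 1.
  case: z_nnil; exists k; rewrite -[z ^+ k]mulr1n.
  by have <- : M = 1%N by apply/anti_leq/andP.
have p_pr := pdiv_prime M_gt1; set p := pdiv M in p_pr *.
have [p_free | /existsNP [j /contrapT zj_p]] := pselect (forall j, ~ p_divisible p (z ^+ j)).
  by exists p.
apply: (IH (M %/ p)%N _ _ _ (p_divisible_descent p_pr (pdiv_dvd M) zkM zj_p)).
  by rewrite ltn_Pdiv ?prime_gt1.
by rewrite divn_gt0 ?prime_gt0 ?pdiv_leq.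
Qed.

End PrimeAvoidingPowers.

Section PDivisibleQuotient.
Variables (R : pzRingType) (p : nat).
Hypotheses (p_pr : prime p) (one_p' : ~ p_divisible p (1 : R)).

Let rel (x y : R) := p_divisible p (x - y).

Let rel_eq x y : x = y -> rel x y.
Proof. by move=> ->; rewrite /rel subrr; apply: p_divisible0. Qed.

Let rel_sym x y : rel x y -> rel y x.
Proof. by rewrite /rel => /p_divisibleN; rewrite opprB. Qed.

Let rel_trans x y z : rel x y -> rel y z -> rel x z.
Proof. by rewrite /rel => xy yz; rewrite -[x](subrK y) -addrA; apply: p_divisibleD. Qed.

Let opp_congr x x' : rel x x' -> rel (- x) (- x').
Proof. by rewrite /rel -opprD; exact: p_divisibleN. Qed.

Let add_congr x x' y y' : rel x x' -> rel y y' -> rel (x + y) (x' + y').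
Proof. by rewrite /rel opprD addrACA; exact: p_divisibleD. Qed.

Let mul_congr x x' y y' : rel x x' -> rel y y' -> rel (x * y) (x' * y').
Proof.
rewrite /rel => xx' yy'; rewrite -[x * y](subrK (x' * y)) -mulrBl -addrA -mulrBr.
by apply: (p_divisibleD p_pr); [apply: p_divisibleMr | apply: p_divisibleMl].
Qed.

Let one_neq0 : ~ rel 1 0.
Proof. by rewrite /rel subr0. Qed.

Definition p_congr_ring : congr_ring R :=
  @CongrRing R rel 0 1 -%R +%R *%R (fun x => rel_eq (erefl x)) rel_sym rel_trans
    opp_congr add_congr mul_congr
    (fun x y z => rel_eq (addrA x y z)) (fun x y => rel_eq (addrC x y))
    (fun x => rel_eq (add0r x)) (fun x => rel_eq (addNr x))
    (fun x y z => rel_eq (mulrA x y z)) (fun x => rel_eq (mul1r x))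
    (fun x => rel_eq (mulr1 x)) (fun x y z => rel_eq (mulrDl x y z))
    (fun x y z => rel_eq (mulrDr x y z)) one_neq0.

Definition p_quot := quot_ring p_congr_ring.
Definition p_quot_pi : R -> p_quot := quot_pi p_congr_ring.

Lemma p_quot_pi_is_zmod_morphism : zmod_morphism p_quot_pi.
Proof. by move=> x y; rewrite -piN -piD. Qed.

Lemma p_quot_pi_is_monoid_morphism : monoid_morphism p_quot_pi.
Proof. by split=> // x y; rewrite -piM. Qed.

HB.instance Definition _ :=
  GRing.isZmodMorphism.Build R p_quot p_quot_pi p_quot_pi_is_zmod_morphism.
HB.instance Definition _ :=
  GRing.isMonoidMorphism.Build R p_quot p_quot_pi p_quot_pi_is_monoid_morphism.

Lemma p_quot_pi_eq0 x : p_quot_pi x = 0 <-> p_divisible p x.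
Proof. by rewrite -(rmorph0 p_quot_pi) pi_eqP /= /rel subr0. Qed.

Lemma p_quot_pchar : p \in [pchar p_quot].
Proof.
apply/andP; split=> //; apply/eqP.
by rewrite -(rmorph_nat p_quot_pi) p_quot_pi_eq0; apply: p_divisible_mulrn.
Qed.

End PDivisibleQuotient.

(** * Localization at the positive integers *)

Section Torsion.
Variable R : pzRingType.

Definition torsion (a : R) := exists n, a *+ n.+1 = 0.

Lemma torsion0 : torsion 0.
Proof. by exists 0%N; rewrite mul0rn. Qed.

Lemma torsionN a : torsion a -> torsion (- a).
Proof. by move=> [n an0]; exists n; rewrite mulNrn an0 oppr0. Qed.

Lemma torsionD a b : torsion a -> torsion b -> torsion (a + b).
Proof.
move=> [n an0] [m bm0]; exists (n.+1 * m.+1).-1.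
rewrite prednK ?muln_gt0 // mulrnDl mulrnA an0 mul0rn.
by rewrite mulnC mulrnA bm0 mul0rn addr0.
Qed.

Lemma torsionMl a b : torsion b -> torsion (a * b).
Proof. by move=> [n bn0]; exists n; rewrite -mulrnAr bn0 mulr0. Qed.

Lemma torsionMr a b : torsion a -> torsion (a * b).
Proof. by move=> [n an0]; exists n; rewrite -mulrnAl an0 mul0r. Qed.

Lemma torsion_mulrn a n : (0 < n)%N -> torsion (a *+ n) <-> torsion a.
Proof.
move=> n_gt0; split=> [[k ank0] | [k ak0]].
  by exists (n * k.+1).-1; rewrite prednK ?muln_gt0 ?n_gt0 // mulrnA.
by exists k; rewrite -mulrnA mulnC mulrnA ak0 mul0rn.
Qed.

End Torsion.

Section Fractions.
Variable R : pzRingType.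
Implicit Types (x y z : R * nat) (D E : nat).

(* The pair [(a, n)] stands for the fraction [a / n.+1]; [num D x] is its
   numerator over a common denominator [D], a multiple of [den x]. *)
Definition den x := x.2.+1.
Definition frac_rel x y := torsion (x.1 *+ den y - y.1 *+ den x).
Definition frac_opp x := (- x.1, x.2).
Definition frac_add x y := (x.1 *+ den y + y.1 *+ den x, (den x * den y).-1).
Definition frac_mul x y := (x.1 * y.1, (den x * den y).-1).
Definition num D x := x.1 *+ (D %/ den x).

Lemma den_gt0 x : (0 < den x)%N. Proof. by []. Qed.

Lemma den_prod a x y : den (a, (den x * den y).-1) = (den x * den y)%N.
Proof. by rewrite /den prednK ?muln_gt0. Qed.

Lemma den_add x y : den (frac_add x y) = (den x * den y)%N.
Proof. exact: den_prod. Qed.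

Lemma den_mul x y : den (frac_mul x y) = (den x * den y)%N.
Proof. exact: den_prod. Qed.

Lemma den_int (a : R) : den (a, 0%N) = 1%N.
Proof. by []. Qed.

Lemma num_opp D x : num D (frac_opp x) = - num D x.
Proof. exact: mulNrn. Qed.

Lemma num_add D x y : (den x * den y %| D)%N ->
  num D (frac_add x y) = num D x + num D y.
Proof.
move=> /dvdnP [k ->]; rewrite /num den_prod mulnK ?muln_gt0 // mulrnDl -!mulrnA.
by rewrite mulnCA mulKn // mulnA mulnK // mulnC.
Qed.

Lemma num_mul D E x y : (den x %| D)%N -> (den y %| E)%N ->
  num (D * E) (frac_mul x y) = num D x * num E y.
Proof.
move=> /dvdnP [s ->] /dvdnP [t ->]; rewrite /num den_prod mulnACA.
by rewrite !mulnK ?muln_gt0 // /= mulrnAl mulrnAr -mulrnA mulnC.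
Qed.

Lemma frac_relE D x y : (0 < D)%N -> (den x %| D)%N -> (den y %| D)%N ->
  frac_rel x y <-> torsion (num D x - num D y).
Proof.
move=> D_gt0 /dvdnP [s Ds] /dvdnP [t Dt].
have numx : num D x = x.1 *+ s by rewrite /num Ds mulnK.
have numy : num D y = y.1 *+ t by rewrite /num Dt mulnK.
have rescale : (num D x - num D y) *+ (den x * den y) =
    (x.1 *+ den y - y.1 *+ den x) *+ D.
  rewrite numx numy !mulrnBl -!mulrnA; congr (_ *+ _ - _ *+ _).
    by rewrite Ds; ring.
  by rewrite Dt; ring.
by rewrite /frac_rel -(torsion_mulrn _ D_gt0) -rescale torsion_mulrn.
Qed.

Lemma frac_rel_num D x y : (0 < D)%N -> (den x %| D)%N -> (den y %| D)%N ->
  num D x = num D y -> frac_rel x y.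
Proof.
by move=> D_gt0 xD yD e; apply/(frac_relE D_gt0 xD yD); rewrite e subrr; apply: torsion0.
Qed.

End Fractions.

(* [dvdn_prod] proves [l %| r] for products of denominators whose factors in [l]
   all occur in [r], by computing the cofactor syntactically. *)
Ltac prod_remove a r :=
  match r with
  | a => constr:(1%N)
  | (?r1 * ?r2)%N => let r1' := prod_remove a r1 in constr:((r1' * r2)%N)
  | (?r1 * ?r2)%N => let r2' := prod_remove a r2 in constr:((r1 * r2')%N)
  end.

Ltac prod_div l r :=
  match l with
  | (?l1 * ?l2)%N => let r' := prod_div l2 r in prod_div l1 r'
  | _ => prod_remove l r
  end.

Ltac dvdn_prod := rewrite ?(den_add, den_mul, den_int) ?mul1n ?muln1;
  match goal with |- is_true (?l %| ?r)%N =>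
    let q := prod_div l r in apply/dvdnP; exists q; ring
  end.

Section FractionRing.
Variable R : pzRingType.
Hypothesis one_ntors : ~ torsion (1 : R).
Implicit Types x y z : R * nat.

Let prod_gt0 x y : (0 < den x * den y)%N. Proof. by rewrite muln_gt0. Qed.

Let rel_refl x : frac_rel x x.
Proof. by rewrite /frac_rel subrr; apply: torsion0. Qed.

Let rel_sym x y : frac_rel x y -> frac_rel y x.
Proof. by rewrite /frac_rel => /torsionN; rewrite opprB. Qed.

Let rel_trans x y z : frac_rel x y -> frac_rel y z -> frac_rel x z.
Proof.
have D_gt0 : (0 < den x * den y * den z)%N by rewrite !muln_gt0.
rewrite !(frac_relE D_gt0) //; try dvdn_prod.
by move=> /torsionD/[apply]; rewrite addrA subrK.
Qed.

Let opp_congr x x' : frac_rel x x' -> frac_rel (frac_opp x) (frac_opp x').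
Proof. by rewrite /frac_rel /= !mulNrn -opprD; apply: torsionN. Qed.

Let add_congr x x' y y' : frac_rel x x' -> frac_rel y y' ->
  frac_rel (frac_add x y) (frac_add x' y').
Proof.
have D_gt0 : (0 < den x * den x' * (den y * den y'))%N by rewrite !muln_gt0.
rewrite !(frac_relE D_gt0) ?num_add //; try dvdn_prod.
by rewrite opprD addrACA; apply: torsionD.
Qed.

Let mul_congr x x' y y' : frac_rel x x' -> frac_rel y y' ->
  frac_rel (frac_mul x y) (frac_mul x' y').
Proof.
have D_gt0 : (0 < den x * den x')%N by rewrite muln_gt0.
have E_gt0 : (0 < den y * den y')%N by rewrite muln_gt0.
have DE_gt0 : (0 < den x * den x' * (den y * den y'))%N by rewrite muln_gt0 D_gt0.
rewrite (frac_relE (x := x) D_gt0) ?(frac_relE (x := y) E_gt0);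
  rewrite ?(frac_relE (x := frac_mul x y) DE_gt0) ?num_mul; try dvdn_prod.
move=> xx' yy'.
rewrite -[X in X - _](subrK (num (den x * den x') x' * num (den y * den y') y)).
by rewrite -mulrBl -addrA -mulrBr; apply: torsionD; [apply: torsionMr | apply: torsionMl].
Qed.

Let rel_same_den x y : den x = den y -> x.1 = y.1 -> frac_rel x y.
Proof. by rewrite /frac_rel => -> ->; rewrite subrr; apply: torsion0. Qed.

Let num0 D n : num D ((0 : R), n) = 0. Proof. by rewrite /num mul0rn. Qed.

Let addA x y z : frac_rel (frac_add x (frac_add y z)) (frac_add (frac_add x y) z).
Proof.
have D_gt0 : (0 < den x * den y * den z)%N by rewrite !muln_gt0.
by apply: (frac_rel_num D_gt0); rewrite ?num_add ?addrA //; dvdn_prod.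
Qed.

Let addC x y : frac_rel (frac_add x y) (frac_add y x).
Proof.
by apply: (frac_rel_num (prod_gt0 x y)); rewrite ?num_add 1?addrC //; dvdn_prod.
Qed.

Let add0 x : frac_rel (frac_add (0, 0%N) x) x.
Proof.
apply: (frac_rel_num (den_gt0 x)); rewrite ?num_add ?num0 ?add0r //; dvdn_prod.
Qed.

Let addN x : frac_rel (frac_add (frac_opp x) x) (0, 0%N).
Proof.
apply: (frac_rel_num (prod_gt0 x x)); rewrite ?num_add ?num_opp ?num0 ?addNr //; dvdn_prod.
Qed.

Let mulA x y z : frac_rel (frac_mul x (frac_mul y z)) (frac_mul (frac_mul x y) z).
Proof. by apply: rel_same_den; rewrite ?den_mul ?mulnA //= mulrA. Qed.

Let mul1l x : frac_rel (frac_mul (1, 0%N) x) x.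
Proof. by apply: rel_same_den; rewrite ?den_mul ?mul1n //= mul1r. Qed.

Let mul1r x : frac_rel (frac_mul x (1, 0%N)) x.
Proof. by apply: rel_same_den; rewrite ?den_mul ?muln1 //= mulr1. Qed.

Let mulDl x y z :
  frac_rel (frac_mul (frac_add x y) z) (frac_add (frac_mul x z) (frac_mul y z)).
Proof.
have D_gt0 : (0 < den x * den y * (den z * den z))%N by rewrite !muln_gt0.
apply: (frac_rel_num D_gt0); try dvdn_prod.
by rewrite num_add ?num_mul ?num_add ?mulrDl //; dvdn_prod.
Qed.

Let mulDr x y z :
  frac_rel (frac_mul x (frac_add y z)) (frac_add (frac_mul x y) (frac_mul x z)).
Proof.
have D_gt0 : (0 < den x * den x * (den y * den z))%N by rewrite !muln_gt0.
apply: (frac_rel_num D_gt0); try dvdn_prod.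
by rewrite num_add ?num_mul ?num_add ?mulrDr //; dvdn_prod.
Qed.

Let one_neq0 : ~ frac_rel ((1 : R), 0%N) (0, 0%N).
Proof. by rewrite /frac_rel mul0rn subr0 mulr1n. Qed.

Definition frac_congr_ring : congr_ring (R * nat)%type :=
  @CongrRing _ (@frac_rel R) (0, 0%N) (1, 0%N) (@frac_opp R) (@frac_add R) (@frac_mul R)
    rel_refl rel_sym rel_trans opp_congr add_congr mul_congr addA addC add0 addN
    mulA mul1l mul1r mulDl mulDr one_neq0.

End FractionRing.

Section Localization.
Variables (R : pzRingType) (one_ntors : ~ torsion (1 : R)).

Definition loc := quot_ring (frac_congr_ring one_ntors).
Definition loc_frac (a : R) (n : nat) : loc := quot_pi _ (a, n).

Lemma loc_frac_eq a n b m : loc_frac a n = loc_frac b m <-> frac_rel (a, n) (b, m).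
Proof. exact: pi_eqP. Qed.

Lemma loc_fracN a n : - loc_frac a n = loc_frac (- a) n.
Proof. by rewrite -piN. Qed.

Lemma loc_fracD a n b m :
  loc_frac a n + loc_frac b m = loc_frac (a *+ m.+1 + b *+ n.+1) (n.+1 * m.+1).-1.
Proof. by rewrite -piD. Qed.

Lemma loc_fracM a n b m : loc_frac a n * loc_frac b m = loc_frac (a * b) (n.+1 * m.+1).-1.
Proof. by rewrite -piM. Qed.

Lemma loc_frac_eq0 a n : loc_frac a n = 0 <-> torsion a.
Proof. by rewrite -[0]/(loc_frac 0 0) loc_frac_eq /frac_rel /= mul0rn subr0 mulr1n. Qed.

Lemma loc_fracX a n m : exists d, loc_frac a n ^+ m = loc_frac (a ^+ m) d.
Proof.
elim: m => [|m [d IHm]]; first by exists 0%N; rewrite !expr0.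
by exists (d.+1 * n.+1).-1; rewrite !exprSr IHm loc_fracM.
Qed.

Lemma loc_frac_surj (u : loc) : exists a n, u = loc_frac a n.
Proof. by elim/quot_ringW: u => [[a n]]; exists a, n. Qed.

End Localization.

Section CentralAlgebra.
Variables (F : pzRingType) (A : nzRingType) (f : {rmorphism F -> A}).

Definition central_alg of (forall a x, f a * x = x * f a) : Type := A.
Hypothesis f_central : forall a x, f a * x = x * f a.
Local Notation C := (central_alg f_central).

HB.instance Definition _ := GRing.NzRing.on C.

Definition central_scale (a : F) (x : C) : C := f a * x.

Lemma central_scaleA a b x :
  central_scale a (central_scale b x) = central_scale (a * b) x.
Proof. by rewrite /central_scale mulrA rmorphM. Qed.

Lemma central_scale1 : left_id 1 central_scale.
Proof. by move=> x; rewrite /central_scale rmorph1 mul1r. Qed.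

Lemma central_scaleDr : right_distributive central_scale +%R.
Proof. by move=> a x y; rewrite /central_scale mulrDr. Qed.

Lemma central_scaleDl x : {morph central_scale^~ x : a b / a + b}.
Proof. by move=> a b; rewrite /central_scale rmorphD mulrDl. Qed.

HB.instance Definition _ := GRing.Zmodule_isLmodule.Build F C
  central_scaleA central_scale1 central_scaleDr central_scaleDl.

Lemma central_scaleAl (a : F) (x y : C) : a *: (x * y) = (a *: x) * y.
Proof. exact: mulrA. Qed.

HB.instance Definition _ := GRing.Lmodule_isLalgebra.Build F C central_scaleAl.

Lemma central_scaleAr (a : F) (x y : C) : a *: (x * y) = x * (a *: y).
Proof. by rewrite /GRing.scale /= /central_scale !mulrA f_central. Qed.

HB.instance Definition _ := GRing.Lalgebra_isAlgebra.Build F C central_scaleAr.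

End CentralAlgebra.

Lemma intr_mulrn (R : pzRingType) (z : int) k : (z%:~R : R) *+ k = (z * k%:Z)%:~R.
Proof. by rewrite intrM mulrzr pmulrn. Qed.

Definition rat_of_frac (z : int) (n : nat) : rat := z%:~R / n.+1%:R.

Lemma rat_of_fracN (z : int) n : rat_of_frac (- z) n = - rat_of_frac z n.
Proof. by rewrite /rat_of_frac intrN mulNr. Qed.

Lemma rat_of_fracD (z1 z2 : int) n m :
  rat_of_frac (z1 * m.+1 + z2 * n.+1) (n.+1 * m.+1).-1 = rat_of_frac z1 n + rat_of_frac z2 m.
Proof.
rewrite /rat_of_frac prednK // natrM intrD !intrM; field.
by rewrite !nat1r !pnatr_eq0.
Qed.

Lemma rat_of_fracM (z1 z2 : int) n m :
  rat_of_frac (z1 * z2) (n.+1 * m.+1).-1 = rat_of_frac z1 n * rat_of_frac z2 m.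
Proof.
rewrite /rat_of_frac prednK // natrM intrM; field.
by rewrite !nat1r !pnatr_eq0.
Qed.

Lemma rat_of_frac_rat q : rat_of_frac (numq q) `|denq q|.-1 = q.
Proof.
rewrite /rat_of_frac prednK ?absz_gt0 ?denq_neq0 // natr_absz gtr0_norm ?denq_gt0 //.
exact: divq_num_den.
Qed.

Section RationalLocalization.
Variables (R : pzRingType) (one_ntors : ~ torsion (1 : R)).
Local Notation loc_frac := (loc_frac one_ntors).

Lemma loc_frac_intr (z1 z2 : int) n m :
  rat_of_frac z1 n = rat_of_frac z2 m -> loc_frac z1%:~R n = loc_frac z2%:~R m.
Proof.
move/eqP; rewrite eqr_div ?pnatr_eq0 // => /eqP e.
have {}e : z1 * m.+1%:Z = z2 * n.+1%:Z by apply: (@intr_inj rat); rewrite !intrM.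
apply/loc_frac_eq; rewrite /frac_rel !intr_mulrn e subrr.
exact: torsion0.
Qed.

Definition rat_frac (q : rat) : loc one_ntors := loc_frac (numq q)%:~R `|denq q|.-1.

Lemma rat_frac_is_zmod_morphism : zmod_morphism rat_frac.
Proof.
move=> a b; rewrite /rat_frac loc_fracN loc_fracD -rmorphN !intr_mulrn -intrD.
by apply: loc_frac_intr; rewrite rat_of_fracD rat_of_fracN !rat_of_frac_rat.
Qed.

Lemma rat_frac_is_monoid_morphism : monoid_morphism rat_frac.
Proof.
split=> // a b; rewrite /rat_frac loc_fracM -intrM.
by apply: loc_frac_intr; rewrite rat_of_fracM !rat_of_frac_rat.
Qed.

HB.instance Definition _ :=
  GRing.isZmodMorphism.Build rat (loc one_ntors) rat_frac rat_frac_is_zmod_morphism.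
HB.instance Definition _ :=
  GRing.isMonoidMorphism.Build rat (loc one_ntors) rat_frac rat_frac_is_monoid_morphism.

Lemma rat_frac_central q u : rat_frac q * u = u * rat_frac q.
Proof.
have [b [k ->]] := loc_frac_surj u.
by rewrite /rat_frac !loc_fracM (commr_int b) (mulnC k.+1).
Qed.

End RationalLocalization.

Section LocalizedIdeals.
Variables (R : pzRingType) (one_ntors : ~ torsion (1 : R)).
Local Notation loc_frac := (loc_frac one_ntors).

Definition loc_set (I : set R) : set (loc one_ntors) :=
  fun u => exists a n, I a /\ u = loc_frac a n.

Lemma right_ideal_loc_set I : right_ideal I -> right_ideal (loc_set I).
Proof.
move=> [I0 IB IM]; have IMn a k : I a -> I (a *+ k) by rewrite -mulr_natr; apply: IM.
split=> [|_ _ [a [n [Ia ->]]] [b [m [Ib ->]]]|_ u [a [n [Ia ->]]]].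
- by exists 0, 0%N; split=> //; apply/esym/loc_frac_eq0/torsion0.
- exists (a *+ m.+1 - b *+ n.+1), (n.+1 * m.+1).-1; split; first by apply: IB; apply: IMn.
  by rewrite loc_fracN loc_fracD mulNrn.
- have [b [k ->]] := loc_frac_surj u.
  by exists (a * b), (n.+1 * k.+1).-1; split; [apply: IM | rewrite loc_fracM].
Qed.

Lemma nil_set_loc_set I : nil_set I -> nil_set (loc_set I).
Proof.
move=> nI _ [a [n [/nI [m am0] ->]]]; exists m.
by have [d ->] := loc_fracX one_ntors a n m; apply/loc_frac_eq0; rewrite am0; apply: torsion0.
Qed.

End LocalizedIdeals.

Lemma NK_rat_algebra (R : pzRingType) (I J : set R) x y :
  right_ideal I -> right_ideal J -> nil_set I -> nil_set J -> I x -> J y ->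
  (forall m, ~ torsion ((x + y) ^+ m)) ->
  exists A : algType rat, countably_generated A /\ NK A.
Proof.
move=> hI hJ nI nJ Ix Jy xy_ntors.
have one_ntors : ~ torsion (1 : R) by have := xy_ntors 0%N; rewrite expr0.
pose A : algType rat := central_alg (@rat_frac_central _ one_ntors).
apply: (@NK_countably_generated_subalg _ A).
refine (@NKWitness A (loc_set I) (loc_set J)
  (loc_frac one_ntors x 0) (loc_frac one_ntors y 0) _ _ _ _ _ _ _).
- exact: right_ideal_loc_set.
- exact: right_ideal_loc_set.
- exact: nil_set_loc_set.
- exact: nil_set_loc_set.
- by exists x, 0%N.
- by exists y, 0%N.
rewrite loc_fracD !mulr1n => -[m].
by have [d ->] := loc_fracX one_ntors (x + y) 0 m; move/loc_frac_eq0; apply: xy_ntors.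
Qed.

Lemma NK_Fp_algebra (R : pzRingType) (I J : set R) x y p : prime p ->
  right_ideal I -> right_ideal J -> nil_set I -> nil_set J -> I x -> J y ->
  (forall j, ~ p_divisible p ((x + y) ^+ j)) ->
  exists A : algType 'F_p, countably_generated A /\ NK A.
Proof.
move=> p_pr hI hJ nI nJ Ix Jy xy_p'.
have one_p' : ~ p_divisible p (1 : R) by have := xy_p' 0%N; rewrite expr0.
pose A : algType 'F_p := pPrimeCharType (p_quot_pchar p_pr one_p').
apply: (@NK_countably_generated_subalg _ A).
pose pi := p_quot_pi p_pr one_p'.
have pi_surj b : exists a, pi a = b by elim/quot_ringW: b => a; exists a.
refine (@NKWitness A (pi @` I) (pi @` J) (pi x) (pi y) _ _ _ _ _ _ _).
- exact: right_ideal_image.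
- exact: right_ideal_image.
- exact: nil_set_image.
- exact: nil_set_image.
- by exists x.
- by exists y.
by rewrite -rmorphD => -[m]; rewrite -rmorphXn p_quot_pi_eq0; apply: xy_p'.
Qed.

Theorem mainTheorem7 :
  (exists R : pzRingType, NK R) <->
  ((exists A : algType rat, countably_generated A /\ NK A) \/
   (exists p : nat, prime p /\
      exists A : algType 'F_p, countably_generated A /\ NK A)).
Proof.
split=> [[R /NK_witnessP [I J x y hI hJ nI nJ Ix Jy nxy]]
        | [[A [_ NK_A]] | [p [_ [A [_ NK_A]]]]]]; [| by exists A | by exists A].
have [[k [n xyk]] | xy_ntors] := pselect (exists k n, (x + y) ^+ k *+ n.+1 = 0).
  have [p p_pr xy_p'] := prime_avoiding_powers nxy (ltn0Sn n) xyk.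
  by right; exists p; split=> //; apply: (NK_Fp_algebra p_pr hI hJ nI nJ Ix Jy).
left; apply: (NK_rat_algebra hI hJ nI nJ Ix Jy) => m [n xymn].
by apply: xy_ntors; exists m, n.
Qed.
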